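(* Let $V$ be a finite-dimensional vector space over a field $\mathbb K$ of characteristic $\neq 2$, let $\mathcal S\subseteq V$, and let $\mathcal H\subset V$ be a linear hyperplane. Suppose that $\mathcal S'=\mathcal S\cap\mathcal H$ is a perfect subset of $\mathcal H$ and that $\mathcal S\setminus\mathcal S'$ spans $V$. Then $\mathcal S$ is perfect in $V$.
   Context: A subset $\mathcal P$ of a vector space $W$ of finite dimension $n$ over a field of characteristic $\neq2$ is perfect (in $W$) if $\{v\otimes v\}_{v\in\mathcal P}$ spans the $\binom{n+1}{2}$-dimensional space of all symmetric tensors in $W\otimes W$. *)

(* V is coordinatized as 'rV[K]_n; subspaces are row spaces of
   matrices (mxalgebra); W (x) W is realized inside 'M[K]_n = V (x) V, with
   u (x) v  represented by  u^T *m v. *)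
From HB Require Import structures.
From mathcomp Require Import all_boot all_order all_algebra.
Set Implicit Arguments. Unset Strict Implicit. Unset Printing Implicit Defensive.
Import GRing.Theory.
Local Open Scope ring_scope.

Definition in_span (K : fieldType) (T : lmodType K) (P : T -> Prop) (x : T) : Prop :=
  exists (s : seq T) (c : seq K),
    (forall i, (i < size s)%N -> P (nth 0 s i)) /\
    x = \sum_(i < size s) c`_i *: nth 0 s i.

(* M is a symmetric tensor of W (x) W, W the row space of the matrix W *)
Definition sym_tensor (K : fieldType) (n m : nat) (W : 'M[K]_(m, n)) (M : 'M[K]_n) : Prop :=
  M^T = M /\ (M <= W)%MS /\ (M^T <= W)%MS.

Definition perfect (K : fieldType) (n m : nat) (P : 'rV[K]_n -> Prop) (W : 'M[K]_(m, n)) : Prop :=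
  (forall v, P v -> (v <= W)%MS) /\
  forall M : 'M[K]_n, sym_tensor W M ->
    in_span (fun A : 'M[K]_n => exists v, P v /\ A = v^T *m v) M.

(* Fix u in S outside the hyperplane H, so that V = H + K u and every symmetric
   tensor M splits as a tensor in H (x) H, a multiple of u (x) u, and a mixed
   term y (x) u + u (x) y.  The first lies in the span of the squares of S /\ H
   by perfectness of H.  For the mixed terms, write w in S \ H as h + a u with
   h in H and a <> 0: then w (x) u + u (x) w is a combination of w (x) w,
   h (x) h and u (x) u, and y |-> y (x) u + u (x) y is linear, so spanning
   propagates from S \ H to all of V. *)
From HB Require Import structures.
From mathcomp Require Import all_boot all_order all_algebra.
Set Implicit Arguments. Unset Strict Implicit. Unset Printing Implicit Defensive.
Import GRing.Theory.
Local Open Scope ring_scope.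

Section InSpan.
Variables (K : fieldType) (T : lmodType K).
Implicit Types (P Q : T -> Prop) (x y : T).

Definition in_span_pairs P x :=
  exists l : seq (K * T), (forall p, p \in l -> P p.2) /\ x = \sum_(p <- l) p.1 *: p.2.

Lemma in_spanE P x : in_span P x <-> in_span_pairs P x.
Proof.
split=> [[s [c [Ps ->]]]|[l [Pl ->]]].
  exists [seq (c`_i, nth 0 s i) | i <- iota 0 (size s)]; split.
    by move=> p /mapP [i]; rewrite mem_iota add0n => /Ps Pi ->.
  by rewrite big_map -(big_mkord xpredT (fun i => c`_i *: nth 0 s i)) /index_iota subn0.
exists (map snd l), (map fst l); split.
  move=> i; rewrite size_map => il.
  by rewrite (nth_map (0, 0)) //; apply: Pl; rewrite mem_nth.
rewrite (big_nth (0, 0)) big_mkord size_map; apply: eq_bigr => i _.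
by rewrite !(nth_map (0, 0)).
Qed.

Lemma in_span0 P : in_span P 0.
Proof. by apply/in_spanE; exists [::]; rewrite big_nil. Qed.

Lemma in_span_mem P x : P x -> in_span P x.
Proof.
move=> Px; apply/in_spanE; exists [:: (1, x)].
by rewrite big_seq1 scale1r; split=> // p; rewrite inE => /eqP ->.
Qed.

Lemma in_spanD P x y : in_span P x -> in_span P y -> in_span P (x + y).
Proof.
move=> /in_spanE [l1 [P1 ->]] /in_spanE [l2 [P2 ->]].
apply/in_spanE; exists (l1 ++ l2); rewrite big_cat; split=> // p.
by rewrite mem_cat => /orP [/P1|/P2].
Qed.

Lemma in_spanZ P a x : in_span P x -> in_span P (a *: x).
Proof.
move=> /in_spanE [l [Pl ->]]; apply/in_spanE.
exists [seq (a * p.1, p.2) | p <- l]; split; first by move=> p /mapP [q /Pl Pq ->].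
by rewrite big_map scaler_sumr; apply: eq_bigr => p _; rewrite scalerA.
Qed.

Lemma in_spanB P x y : in_span P x -> in_span P y -> in_span P (x - y).
Proof. by move=> Px /(in_spanZ (-1)); rewrite scaleN1r; apply: in_spanD. Qed.

Lemma in_spanW P Q x : (forall y, P y -> Q y) -> in_span P x -> in_span Q x.
Proof. by move=> PQ [s [c [Ps ->]]]; exists s, c; split=> // i /Ps /PQ. Qed.

Lemma in_span_witness P x : x != 0 -> in_span P x -> exists y, P y.
Proof.
move=> x_neq0 [[|y s] [c [Ps Ex]]]; last by exists y; apply: (Ps 0%N).
by move: x_neq0; rewrite Ex big_ord0 eqxx.
Qed.

End InSpan.

Lemma in_span_linear (K : fieldType) (T U : lmodType K) (f : T -> U)
    (P : T -> Prop) (Q : U -> Prop) (x : T) :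
    linear f -> (forall y, P y -> in_span Q (f y)) ->
  in_span P x -> in_span Q (f x).
Proof.
move=> f_lin PQf /in_spanE [l [Pl ->]].
elim: l Pl => [_|p l IHl Pl].
  have f0 : f 0 = 0.
    have := f_lin 1 0 0; rewrite !scale1r addr0 => /(congr1 (fun z => z - f 0)).
    by rewrite addrK subrr.
  by rewrite big_nil f0; apply: in_span0.
rewrite big_cons f_lin; apply: in_spanD; first by apply/in_spanZ/PQf/Pl/mem_head.
by apply: IHl => q lq; apply: Pl; rewrite in_cons lq orbT.
Qed.

Section Tensors.
Variables (K : fieldType) (n : nat).
Implicit Types (u v h : 'rV[K]_n).

Definition tsquares (P : 'rV[K]_n -> Prop) (A : 'M[K]_n) := exists v, P v /\ A = v^T *m v.

Definition symprod u v : 'M[K]_n := u^T *m v + v^T *m u.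

Lemma symprod_linear u : linear (symprod ^~ u).
Proof.
move=> a x y; rewrite /symprod linearD linearZ /= mulmxDl mulmxDr.
by rewrite -scalemxAl -scalemxAr scalerDr addrACA.
Qed.

Lemma symprod_sub_sq h u a : a != 0 ->
  symprod (h + a *: u) u =
    a^-1 *: ((h + a *: u)^T *m (h + a *: u) - h^T *m h) + a *: (u^T *m u).
Proof.
move=> a_neq0; rewrite /symprod [(h + _)^T]linearD linearZ /= !mulmxDl !mulmxDr.
rewrite -!scalemxAl -!scalemxAr scalerA [in RHS](addrC (h^T *m h)) [in RHS]addrAC addrK.
by rewrite !scalerDr !scalerA mulKf // mulVf // !scale1r [LHS]addrAC.
Qed.

(* Expanding M = (Q + c u)^T M (Q + c u): the cross terms are the symmetric
   product of c^T M Q with u because M is symmetric. *)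
Lemma sym_mx_decomp (M Q : 'M[K]_n) (c : 'cV[K]_n) u :
    M^T = M -> Q + c *m u = 1%:M ->
  M = Q^T *m M *m Q + symprod (c^T *m M *m Q) u + (c^T *m M *m c) 0 0 *: (u^T *m u).
Proof.
move=> MT QcuE; rewrite {1}(_ : M = (Q + c *m u)^T *m M *m (Q + c *m u)); last first.
  by rewrite QcuE trmx1 mul1mx mulmx1.
rewrite [(Q + _)^T]linearD /= [(c *m u)^T]trmx_mul !mulmxDl !mulmxDr !mulmxA.
rewrite scalemxAr -mul_scalar_mx -mx11_scalar /symprod.
by rewrite !trmx_mul trmxK MT !mulmxA !addrA.
Qed.

Lemma sym_tensor_congr p m (W : 'M[K]_(m, n)) (M : 'M[K]_p) (Q : 'M[K]_(p, n)) :
  M^T = M -> (Q <= W)%MS -> sym_tensor W (Q^T *m M *m Q).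
Proof.
move=> MT QW; have sym : (Q^T *m M *m Q)^T = Q^T *m M *m Q.
  by rewrite !trmx_mul trmxK MT mulmxA.
by rewrite /sym_tensor sym; do !split=> //; apply: submx_trans (submxMl _ _) QW.
Qed.

Lemma sym_tensor_sq m (W : 'M[K]_(m, n)) h : (h <= W)%MS -> sym_tensor W (h^T *m h).
Proof. by move=> hW; rewrite -[h^T]mulmx1; apply: sym_tensor_congr; rewrite ?trmx1. Qed.

End Tensors.

Section Hyperplane.
Variables (K : fieldType) (n : nat) (H : 'M[K]_n) (u : 'rV[K]_n).
Hypotheses (n_gt0 : (0 < n)%N) (rankH : \rank H = n.-1) (uH : ~ (u <= H)%MS).

Lemma hyperplane_addsmx_full : row_full (H + u).
Proof.
have H_ltmx : (H < H + u)%MS.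
  rewrite ltmxE addsmxSl; apply/negP => Hu_le_H.
  by apply: uH; apply: submx_trans (addsmxSr H u) Hu_le_H.
by rewrite /row_full eqn_leq rank_leq_col -{1}(prednK n_gt0) -rankH rank_ltmx.
Qed.

Lemma hyperplane_decomp m (A : 'M[K]_(m, n)) :
  exists Q c, (Q <= H)%MS /\ A = Q + c *m u.
Proof.
have /sub_addsmxP [[D c] /= ->] := submx_full A hyperplane_addsmx_full.
by exists (D *m H), c; rewrite submxMl.
Qed.

Lemma hyperplane_decomp_row (w : 'rV[K]_n) :
  exists h a, (h <= H)%MS /\ w = h + a *: u.
Proof.
have [h [c [hH ->]]] := hyperplane_decomp w.
by exists h, (c 0 0); rewrite {1}(mx11_scalar c) mul_scalar_mx.
Qed.

End Hyperplane.

Theorem lemma2p1 (K : fieldType) (n : nat) (S : 'rV[K]_n -> Prop) (H : 'M[K]_n) :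
  ~~ (2%N \in [pchar K]) ->
  (0 < n)%N -> \rank H = n.-1 ->
  perfect (fun v => S v /\ (v <= H)%MS) H ->
  (forall x : 'rV[K]_n, in_span (fun v => S v /\ ~ (v <= H)%MS) x) ->
  perfect S (1%:M : 'M[K]_n).
Proof.
move=> _ n_gt0 rankH [_ perfH] spanS.
split=> [v _|M [MT _]]; first exact: submx1.
have spanH M' : sym_tensor H M' -> in_span (tsquares S) M'.
  by move/perfH; apply: in_spanW => A [v [[Sv _] ->]]; exists v.
have [u [Su uH]] : exists u, S u /\ ~ (u <= H)%MS.
  apply: in_span_witness (spanS (const_mx 1)).
  by apply/negP => /eqP/matrixP/(_ 0 (Ordinal n_gt0)); rewrite !mxE => /eqP; rewrite oner_eq0.
have spanu : in_span (tsquares S) (u^T *m u) by apply: in_span_mem; exists u.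
have spanSu w : S w /\ ~ (w <= H)%MS -> in_span (tsquares S) (symprod w u).
  move=> [Sw wH]; have [h [a [hH Ew]]] := hyperplane_decomp_row n_gt0 rankH uH w.
  have a_neq0 : a != 0 by apply: contra_notN wH => /eqP a0; rewrite Ew a0 scale0r addr0.
  rewrite Ew symprod_sub_sq // -Ew; apply/in_spanD/in_spanZ/spanu/in_spanZ.
  by apply: in_spanB; [apply: in_span_mem; exists w | apply/spanH/sym_tensor_sq].
have [Q [c [QH /esym QcuE]]] := hyperplane_decomp n_gt0 rankH uH (1%:M : 'M[K]_n).
rewrite (sym_mx_decomp MT QcuE); apply/in_spanD/in_spanZ/spanu/in_spanD.
  exact/spanH/sym_tensor_congr.
exact: in_span_linear (symprod_linear u) spanSu (spanS _).
Qed.
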